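(* Let $B$ be a blueprint with a zero $0$. Then a subset $I\subseteq B$ is an ideal of $B$ if and only if: (1) $ab\in I$ for all $a\in I$, $b\in B$; (2) $0\in I$; and (3) whenever $a+\sum_j b_j\equiv\sum_k c_k$ with $a\in B$ and all $b_j,c_k\in I$, then $a\in I$.
   Context: A monoid is a commutative semigroup $A$, written multiplicatively, with neutral element $1$. For a monoid $A$, $\mathbb N[A]$ denotes the semiring of finite formal sums $\sum a_i$ of elements $a_i\in A$ (repetitions allowed), with empty sum $\underline0$ and multiplication extended bilinearly from $A$. A pre-addition on $A$ is a relation $\mathcal R\subseteq\mathbb N[A]\times\mathbb N[A]$, written $\sum a_i\equiv\sum b_j$, which is an equivalence relation and satisfies: if $\sum a_i\equiv\sum b_j$ and $\sum c_k\equiv\sum d_l$, then $\sum a_i+\sum c_k\equiv\sum b_j+\sum d_l$ and $\sum_{i,k}a_ic_k\equiv\sum_{j,l}b_jd_l$. A blueprint $B=(A,\mathcal R)$ is a monoid $A$ with a pre-addition $\mathcal R$; we write $a\in B$ for $a\in A$. An element $e$ with $e\equiv\underline0$ is a zero of $B$. For an equivalence relation $\sim$ on $A$, its linear extension $\sim_{\mathbb N}$ is the equivalence relation on $\mathbb N[A]$ generated by $\sum_{i=1}^n a_i\sim_{\mathbb N}\sum_{i=1}^n b_i$ whenever $a_i\sim b_i$ for all $i$. For a subset $I\subseteq B$, let $\sim^I$ be the equivalence relation on $A$ with $a\sim^I b$ iff $a=b$ or $a,b\in I$, and let $\sim_I$ be the relation on $A$ with $a\sim_I b$ iff there is a finite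 sequence $a\equiv\sum_k c_{1,k}\sim^I_{\mathbb N}\sum_k d_{1,k}\equiv\sum_k c_{2,k}\sim^I_{\mathbb N}\cdots\sim^I_{\mathbb N}\sum_k d_{n,k}\equiv b$ with $c_{i,k},d_{i,k}\in A$. An ideal of $B$ is a subset $I\subseteq B$ such that (I1) $ab\in I$ for all $a\in I$, $b\in B$; (I2) every zero of $B$ lies in $I$; (I3) if $a\sim_I b$ and $b\in I$, then $a\in I$. *)

From Stdlib Require Import List Permutation Relations.
Import ListNotations.

(* Elements of N[A] (finite formal sums with repetitions) are represented by
   lists; two lists represent the same element of N[A] iff they are
   permutations of each other. *)

Definition sum_mul {A : Type} (m : A -> A -> A) (s t : list A) : list A :=
  flat_map (fun a => map (fun c => m a c) t) s.

Record blueprint := Blueprint {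
  carrier :> Type;
  bmul : carrier -> carrier -> carrier;
  bone : carrier;
  bmul_assoc : forall a b c, bmul a (bmul b c) = bmul (bmul a b) c;
  bmul_comm : forall a b, bmul a b = bmul b a;
  bmul_1l : forall a, bmul bone a = a;
  bR : list carrier -> list carrier -> Prop;
  (* reflexivity on N[A] (lists equal as multisets are the same formal sum) *)
  bR_refl : forall s t, Permutation s t -> bR s t;
  bR_sym : forall s t, bR s t -> bR t s;
  bR_trans : forall s t u, bR s t -> bR t u -> bR s u;
  bR_add : forall s t u v, bR s t -> bR u v -> bR (s ++ u) (t ++ v);
  bR_mul : forall s t u v, bR s t -> bR u v ->
             bR (sum_mul bmul s u) (sum_mul bmul t v)
}.

Arguments bmul {b0} : rename.
Arguments bR {b0} : rename.

Definition is_zero (B : blueprint) (e : B) : Prop := bR [e] [].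

Section Ideals.
Variable B : blueprint.
Variable I : B -> Prop.

Definition simI (a b : B) : Prop := a = b \/ (I a /\ I b).

(* its linear extension ~^I_N on N[A]: the equivalence relation generated by
   sum a_i ~ sum b_i with a_i ~^I b_i (and by equality in N[A]) *)
Definition linI_step (s t : list B) : Prop :=
  Permutation s t \/ Forall2 simI s t.
Definition linI : list B -> list B -> Prop := clos_refl_sym_trans _ linI_step.

(* chains  s ≡ c_1 ~ d_1 ≡ c_2 ~ ... ~ d_n ≡ v  (n >= 1) *)
Inductive chainI : list B -> list B -> Prop :=
| chainI_one : forall s c d v, bR s c -> linI c d -> bR d v -> chainI s v
| chainI_step : forall s u c d v,
    chainI s u -> bR u c -> linI c d -> bR d v -> chainI s v.

Definition sim_I (a b : B) : Prop := chainI [a] [b].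

Definition is_ideal : Prop :=
  (forall a b : B, I a -> I (bmul a b)) /\
  (forall e : B, is_zero B e -> I e) /\
  (forall a b : B, sim_I a b -> I b -> I a).
End Ideals.

From Stdlib Require Import List Permutation Relations.
Import ListNotations.

(* Write s ≈ t when s + Σb ≡ t + Σc for some sums Σb, Σc of elements of I.
   This relation contains ≡ and ~^I_N and is an equivalence, so it contains
   every chain defining ~_I; hence condition (3) is enough for (I3).
   Conversely, if a + Σb ≡ Σc then a ~_I 0: pad a with zeros, trade them for
   the b's, pass to Σc and trade the c's for zeros again. *)

Lemma Forall2_repeat_l {A C : Type} (R : A -> C -> Prop) (x : A) (l : list C) :
  Forall (R x) l -> Forall2 R (repeat x (length l)) l.
Proof. induction 1; constructor; auto. Qed.

Lemma Forall2_repeat_r {A C : Type} (R : A -> C -> Prop) (x : C) (l : list A) :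
  Forall (fun y => R y x) l -> Forall2 R l (repeat x (length l)).
Proof. induction 1; constructor; auto. Qed.

Lemma Permutation_app_interchange {A : Type} (a b c d : list A) :
  Permutation ((a ++ b) ++ (c ++ d)) ((a ++ c) ++ (b ++ d)).
Proof.
  rewrite <- !app_assoc; apply Permutation_app_head.
  rewrite !app_assoc; apply Permutation_app_tail, Permutation_app_comm.
Qed.

Section PreAddition.
Variable B : blueprint.

Lemma bR_perm_l (s s' t : list B) : Permutation s s' -> bR s t -> bR s' t.
Proof. intros Hs H; exact (bR_trans _ _ _ _ (bR_sym _ _ _ (bR_refl _ _ _ Hs)) H). Qed.

Lemma bR_perm_r (s t t' : list B) : Permutation t t' -> bR s t -> bR s t'.
Proof. intros Ht H; exact (bR_trans _ _ _ _ H (bR_refl _ _ _ Ht)). Qed.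

Lemma bR_repeat_zero (z : B) (n : nat) : is_zero B z -> bR (repeat z n) [].
Proof.
  intros hz; induction n as [|n IHn].
  - apply bR_refl; reflexivity.
  - exact (bR_add _ [z] [] _ [] hz IHn).
Qed.

Variable I : B -> Prop.

Definition bR_mod (s t : list B) : Prop :=
  exists bs cs, Forall I bs /\ Forall I cs /\ bR (s ++ bs) (t ++ cs).

Lemma bR_mod_of_bR (s t : list B) : bR s t -> bR_mod s t.
Proof. intros H; exists [], []; rewrite !app_nil_r; auto. Qed.

Lemma bR_mod_sym (s t : list B) : bR_mod s t -> bR_mod t s.
Proof.
  intros (bs & cs & Hbs & Hcs & H); exists cs, bs; auto using bR_sym.
Qed.

Lemma bR_mod_trans (s t u : list B) : bR_mod s t -> bR_mod t u -> bR_mod s u.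
Proof.
  intros (bs & cs & Hbs & Hcs & Hst) (bs' & cs' & Hbs' & Hcs' & Htu).
  exists (bs ++ bs'), (cs' ++ cs); repeat split; try (apply Forall_app; auto).
  pose proof (bR_add _ _ _ _ _ Hst (bR_refl _ bs' bs' (Permutation_refl _))) as Hst'.
  pose proof (bR_add _ _ _ _ _ Htu (bR_refl _ cs cs (Permutation_refl _))) as Htu'.
  rewrite !app_assoc.
  apply (bR_trans _ _ _ _ Hst'); eapply bR_perm_l; [|exact Htu'].
  rewrite <- !app_assoc; apply Permutation_app_head, Permutation_app_comm.
Qed.

Lemma bR_mod_app (s t s' t' : list B) :
  bR_mod s t -> bR_mod s' t' -> bR_mod (s ++ s') (t ++ t').
Proof.
  intros (bs & cs & Hbs & Hcs & H) (bs' & cs' & Hbs' & Hcs' & H').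
  exists (bs ++ bs'), (cs ++ cs'); repeat split; try (apply Forall_app; auto).
  apply (bR_perm_l _ _ _ (Permutation_app_interchange _ _ _ _)),
        (bR_perm_r _ _ _ (Permutation_app_interchange _ _ _ _)).
  exact (bR_add _ _ _ _ _ H H').
Qed.

Lemma bR_mod_of_simI (s t : list B) : Forall2 (simI B I) s t -> bR_mod s t.
Proof.
  induction 1 as [|x y s t Hxy _ IH].
  - apply bR_mod_of_bR, bR_refl; reflexivity.
  - apply (bR_mod_app [x] [y]); [|exact IH].
    destruct Hxy as [<- | [Ix Iy]].
    + apply bR_mod_of_bR, bR_refl; reflexivity.
    + exists [y], [x]; repeat split; auto. apply bR_refl, perm_swap.
Qed.

Lemma bR_mod_of_linI (s t : list B) : linI B I s t -> bR_mod s t.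
Proof.
  induction 1 as [s t [Hp | Hsim] | s | s t _ IH | s t u _ IH1 _ IH2].
  - apply bR_mod_of_bR, bR_refl, Hp.
  - apply bR_mod_of_simI, Hsim.
  - apply bR_mod_of_bR, bR_refl; reflexivity.
  - apply bR_mod_sym, IH.
  - exact (bR_mod_trans _ _ _ IH1 IH2).
Qed.

Lemma bR_mod_of_chainI (s t : list B) : chainI B I s t -> bR_mod s t.
Proof.
  assert (link : forall s c d v,
      bR s c -> linI B I c d -> bR d v -> bR_mod s v).
  { intros s' c d v Hc Hcd Hd.
    apply (bR_mod_trans _ _ _ (bR_mod_of_bR _ _ Hc)),
          (bR_mod_trans _ _ _ (bR_mod_of_linI _ _ Hcd)), bR_mod_of_bR, Hd. }
  induction 1 as [s c d v Hc Hcd Hd | s u c d v _ IH Hc Hcd Hd].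
  - exact (link _ _ _ _ Hc Hcd Hd).
  - exact (bR_mod_trans _ _ _ IH (link _ _ _ _ Hc Hcd Hd)).
Qed.

Lemma ideal_closed_of_sim_I :
  (forall a bs cs, bR (a :: bs) cs -> Forall I bs -> Forall I cs -> I a) ->
  forall a b, sim_I B I a b -> I b -> I a.
Proof.
  intros Hclosed a b Hab Ib.
  destruct (bR_mod_of_chainI _ _ Hab) as (bs & cs & Hbs & Hcs & H).
  exact (Hclosed a bs (b :: cs) H Hbs (Forall_cons _ Ib Hcs)).
Qed.

Lemma sim_I_zero (z : B) (a : B) (bs cs : list B) :
  is_zero B z -> I z -> bR (a :: bs) cs -> Forall I bs -> Forall I cs ->
  sim_I B I a z.
Proof.
  intros hz Iz H Hbs Hcs.
  assert (trade : forall l, Forall I l ->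
            Forall (simI B I z) l /\ Forall (fun y => simI B I y z) l).
  { intros l Hl; split; refine (Forall_impl _ _ Hl); right; auto. }
  apply (chainI_step B I [a] (a :: bs) cs (repeat z (length cs)) [z]).
  - apply (chainI_one B I [a] (a :: repeat z (length bs)) (a :: bs)).
    + apply (bR_add _ [a] [a] [] _ (bR_refl _ _ _ (Permutation_refl _))),
            bR_sym, bR_repeat_zero, hz.
    + apply rst_step; right; constructor; [now left|].
      apply Forall2_repeat_l, trade, Hbs.
    + apply bR_refl; reflexivity.
  - exact H.
  - apply rst_step; right; apply Forall2_repeat_r, trade, Hcs.
  - exact (bR_trans _ _ _ _ (bR_repeat_zero _ _ hz) (bR_sym _ _ _ hz)).
Qed.

End PreAddition.

Theorem mainTheorem11 (B : blueprint) (z : B) (hz : is_zero B z)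
  (I : B -> Prop) :
  is_ideal B I <->
  ((forall a b : B, I a -> I (bmul a b)) /\
   I z /\
   (forall (a : B) (bs cs : list B),
      bR (a :: bs) cs -> Forall I bs -> Forall I cs -> I a)).
Proof.
  split.
  - intros (Hmul & Hzeros & Hsim).
    pose proof (Hzeros z hz) as Iz.
    repeat split; [exact Hmul | exact Iz |].
    intros a bs cs H Hbs Hcs.
    exact (Hsim a z (sim_I_zero B I z a bs cs hz Iz H Hbs Hcs) Iz).
  - intros (Hmul & _ & Hclosed).
    repeat split; [exact Hmul | | exact (ideal_closed_of_sim_I B I Hclosed)].
    intros e He; exact (Hclosed e [] [] He (Forall_nil _) (Forall_nil _)).
Qed.
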